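(* There exists a problem instance, consisting of a finite set $\mathbb{X}$, a Gaussian process prior over $f:\mathbb{X}\to\mathbb{R}$, and a base algorithm $\mathcal{A}$ assigning to each function $g:\mathbb{X}\to\mathbb{R}$ a target set $\mathcal{O}_{\mathcal{A}}(g)\subset\mathbb{X}$, such that if the sequence of points $\{x_n\}_{n=1}^\infty$ is chosen according to the PS-BAX algorithm, then there is a set $X\subset\mathbb{X}$ with $$\lim_{n\to\infty}\mathbf{P}_n(\mathcal{O}_{\mathcal{A}}(f)=X)=1/2$$ almost surely for $f$ drawn from the prior.
   Context: Probabilistic model: $f$ is drawn from a (possibly degenerate) Gaussian process prior on $\mathbb{X}$; observations are $y_k=f(x_k)+\epsilon_k$ with $\epsilon_k$ i.i.d. $\mathcal{N}(0,\sigma^2)$, independent of $f$, for some $\sigma^2\ge0$. Data: $\mathcal{D}_0$ is an initial dataset and $\mathcal{D}_n=\mathcal{D}_{n-1}\cup\{(x_n,y_n)\}$. $\mathbf{P}_n$ denotes conditional probability given the $\sigma$-algebra generated by $\mathcal{D}_{n-1}$; $\sigma_n(x)$ is the posterior standard deviation of $f(x)$ given $\mathcal{D}_{n-1}$. PS-BAX algorithm: at each iteration $n$, (1) draw $\tilde f_n$ from the posterior $p(f\mid\mathcal{D}_{n-1})$; (2) set $X_n=\mathcal{O}_{\mathcal{A}}(\tilde f_n)$; (3) choose $x_n\in\arg\max_{x\in X_n}\sigma_n(x)$; (4) observe $y_n=f(x_n)+\epsilon_n$ and update $\mathcal{D}_n$. *)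

From HB Require Import structures.
From mathcomp Require Import all_boot all_order all_algebra.
From mathcomp Require Import all_classical all_reals all_analysis.
Set Implicit Arguments. Unset Strict Implicit. Unset Printing Implicit Defensive.
Import Order.TTheory GRing.Theory Num.Theory.
Import numFieldNormedType.Exports.
Local Open Scope classical_set_scope.
Local Open Scope ring_scope.

Section PSBAX.
Context {R : realType}.

Definition cyl (X : Type) : set (set (X -> R)) :=
  [set S | exists (x : X) (B : set R), measurable B /\ S = [set g | B (g x)]].
Definition fun_sigma (X : Type) : set (set (X -> R)) := smallest (sigma_algebra setT) (@cyl X).

Context {d : measure_display} {T : measurableType d}.

Definition gen (G : set (set T)) : set (set T) := smallest (sigma_algebra setT) G.

Definition rv_gen (Y : T -> R) : set (set T) :=
  [set A | exists B : set R, measurable B /\ A = Y @^-1` B].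
Definition loc_gen (X : Type) (Z : T -> X) : set (set T) :=
  [set A | exists S : set X, A = Z @^-1` S].
Definition fun_gen (X : Type) (Z : T -> X -> R) : set (set T) :=
  [set A | exists S, @fun_sigma X S /\ A = Z @^-1` S].

Variable P : probability T R.

Definition cond_exp_version (G : set (set T)) (Y Z : T -> R) : Prop :=
  (forall B : set R, measurable B -> G (Z @^-1` B)) /\
  P.-integrable setT (EFin \o Z) /\
  forall B, G B -> (\int[P]_(w in B) (Z w)%:E = \int[P]_(w in B) (Y w)%:E)%E.

Definition cond_prob_version (G : set (set T)) (A : set T) (Z : T -> R) :=
  cond_exp_version G (\1_A) Z.

Definition normal_law (Y : T -> R) (m v : R) : Prop :=
  measurable_fun setT Y /\
  forall B : set R, measurable B ->
    P (Y @^-1` B) = if v == 0 then (\1_B m)%:E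
                    else normal_prob m (Num.sqrt v) B.

Definition indep_family (I : eqType) (G : I -> set (set T)) : Prop :=
  forall (J : seq I) (A : I -> set T), uniq J ->
    (forall i, i \in J -> G i (A i)) ->
    P (\bigcap_(i in [set i | i \in J]) A i) = (\prod_(i <- J) P (A i))%E.

Variable X : finType.

Definition gaussian_process (F : T -> X -> R) (mu : X -> R)
    (K : X -> X -> R) : Prop :=
  forall c : X -> R,
    normal_law (fun w => \sum_x c x * F w x) (\sum_x c x * mu x)
               (\sum_x \sum_y c x * c y * K x y).

(** Data.  The initial dataset D_0 has locations s0; iteration n >= 1 of the
    algorithm queries xs n.  Observation number k (0-based, counting D_0
    first) is at location [loc k] with noise [eps k]. *)
Definition loc (s0 : seq X) (xs : nat -> T -> X) (k : nat) : T -> X :=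
  fun w => if (k < size s0)%N then nth (xs 0%N w) s0 k
           else xs (k - size s0).+1%N w.
Definition obs (s0 : seq X) (xs : nat -> T -> X) (F : T -> X -> R)
    (eps : nat -> T -> R) (k : nat) : T -> R :=
  fun w => F w (loc s0 xs k w) + eps k w.

(** sigma-algebra generated by D_{n-1} (first size s0 + (n-1) observations). *)
Definition hist s0 xs F eps (n : nat) : set (set T) :=
  gen [set A | exists k, (k < size s0 + n.-1)%N /\
        (loc_gen (loc s0 xs k) A \/ rv_gen (obs s0 xs F eps k) A)].

(** All randomness available before the n-th posterior draw:
    f, all noise variables, and the previous posterior samples. *)
Definition pre_info (F : T -> X -> R) (eps : nat -> T -> R)
    (ft : nat -> T -> X -> R) (n : nat) : set (set T) :=
  gen [set A | fun_gen F A \/ (exists k, rv_gen (eps k) A) \/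
               (exists j, (0 < j < n)%N /\ fun_gen (ft j) A)].

Definition psbax_run (mu : X -> R) (K : X -> X -> R) (s2 : R)
    (O : (X -> R) -> set X) (s0 : seq X)
    (F : T -> X -> R) (eps : nat -> T -> R) (ft : nat -> T -> X -> R)
    (xs : nat -> T -> X) (sig : nat -> T -> X -> R) : Prop :=
  (forall x, measurable_fun setT (fun w => F w x)) /\
  gaussian_process F mu K /\
  (forall k, normal_law (eps k) 0 s2) /\
  indep_family (fun i : option nat =>
                  if i is Some k then gen (rv_gen (eps k)) else gen (fun_gen F)) /\
  (forall n, (0 < n)%N ->
     let G := hist s0 xs F eps n in
     (* sig n w x is the posterior standard deviation of f(x) given D_{n-1} *)
     (forall x, (forall w, 0 <= sig n w x) /\
        exists M, cond_exp_version G (fun w => F w x) M /\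
          cond_exp_version G (fun w => (F w x - M w) ^+ 2)
                             (fun w => sig n w x ^+ 2)) /\
     (* (1) ft n is a draw from p(f | D_{n-1}) using fresh randomness:
        conditionally on D_{n-1} it has the posterior law of f and is
        independent of (f, noise, previous samples) *)
     (forall x, measurable_fun setT (fun w => ft n w x)) /\
     (forall A S Z1 Z2, pre_info F eps ft n A -> @fun_sigma X S ->
        cond_prob_version G A Z1 ->
        cond_prob_version G [set w | S (F w)] Z2 ->
        cond_prob_version G (A `&` [set w | S (ft n w)]) (Z1 \* Z2)) /\
     (forall w, O (ft n w) (xs n w) /\
        forall x', O (ft n w) x' -> sig n w x' <= sig n w (xs n w)) /\
     (* the choice (incl. tie-breaking) uses only D_{n-1} and ft n *)
     (forall x, gen [set A | G A \/ fun_gen (ft n) A] (xs n @^-1` [set x]))).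

End PSBAX.
Arguments cyl {R} X.
Arguments fun_sigma {R} X.

(** On X = option bool, the target set O(g) = [set Some (0 < g None)] depends
    only on the sign of f at the hidden point None, where f(None) ~ N(0,1),
    whereas PS-BAX only ever queries the decoy points Some b, at which f
    vanishes and the observations are noiseless.  The data D_(n-1) are thus,
    up to null sets, just the signs at None of the earlier posterior samples.
    Since each posterior sample is drawn independently of f given the data,
    induction on n shows that {f(None) > 0} stays independent of these signs
    and keeps conditional probability 1/2: the posterior never learns the
    target. *)

From HB Require Import structures.
From mathcomp Require Import all_boot all_order all_algebra.
From mathcomp Require Import all_classical all_reals all_analysis.
From mathcomp Require Import measurable_realfun lra.
Set Implicit Arguments.
Unset Strict Implicit.
Unset Printing Implicit Defensive.
Import Order.TTheory GRing.Theory Num.Theory.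
Import numFieldNormedType.Exports.
Local Open Scope classical_set_scope.
Local Open Scope ring_scope.

Section measure_lemmas.
Context (R : realType) (d : measure_display) (T : measurableType d)
  (P : probability T R).

Lemma measurable_ltr_set (d' : measure_display) (T' : measurableType d')
    (S : set bool) (f g : T' -> R) :
  measurable_fun setT f -> measurable_fun setT g ->
  measurable [set w | S (f w < g w)].
Proof.
move=> mf mg; have mS : measurable S by [].
by have := measurable_fun_ltr mf mg measurableT mS; rewrite setTI.
Qed.

Lemma ae_not_of_integral_pos_eq0 (g : T -> R) (B : set T) : measurable B ->
  measurable_fun setT g -> (forall w, B w -> 0 < g w) ->
  (\int[P]_(w in B) (g w)%:E = 0)%E -> {ae P, forall w, ~ B w}.
Proof.
move=> mB mg gB0 intg0.
have mgB : measurable_fun B (EFin \o g).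
  by apply/measurable_EFinP; exact: measurable_funS mg.
have : (\int[P]_(w in B) `|(g w)%:E| = 0)%E.
  rewrite -intg0; apply: eq_integral => w /set_mem Bw.
  by rewrite gee0_abs // lee_fin ltW // gB0.
move=> /(ae_eq_integral_abs P mB mgB); apply: filterS => w gw0 Bw.
by move: (gw0 Bw) (gB0 w Bw) => /= [->]; rewrite ltxx.
Qed.

Lemma ae_eq_cst_of_integral_preimage (Z : T -> R) (c : R) :
  measurable_fun setT Z -> P.-integrable setT (EFin \o Z) ->
  (forall Y, measurable Y ->
     (\int[P]_(w in Z @^-1` Y) (Z w)%:E = c%:E * P (Z @^-1` Y))%E) ->
  {ae P, forall w, Z w = c}.
Proof.
move=> mZ iZ hZ.
have mZY Y : measurable Y -> measurable (Z @^-1` Y).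
  by move=> mY; rewrite -[_ @^-1` _]setTI; exact: mZ.
have diff0 Y : measurable Y ->
    (\int[P]_(w in Z @^-1` Y) ((Z w)%:E - (cst c w)%:E) = 0)%E /\
    (\int[P]_(w in Z @^-1` Y) ((cst c w)%:E - (Z w)%:E) = 0)%E.
  move=> mY; have mB := mZY Y mY.
  have iZB : P.-integrable (Z @^-1` Y) (EFin \o Z) by exact: integrableS iZ.
  have icB := finite_measure_integrable_cst P c mB.
  have intc : (\int[P]_(w in Z @^-1` Y) (cst c w)%:E = c%:E * P (Z @^-1` Y))%E.
    exact: (integral_cst P mB c%:E).
  by rewrite !integralB_EFin // hZ // intc subee ?fin_numM ?fin_num_measure.
have above : {ae P, forall w, ~ `]c, +oo[%classic (Z w)}.
  apply: (@ae_not_of_integral_pos_eq0 (Z \- cst c)).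
  - exact: mZY (measurable_itv _).
  - exact: measurable_funB.
  - by move=> w /=; rewrite in_itv andbT subr_gt0.
  by under eq_integral do rewrite EFinB; exact: (diff0 _ (measurable_itv _)).1.
have below : {ae P, forall w, ~ `]-oo, c[%classic (Z w)}.
  apply: (@ae_not_of_integral_pos_eq0 (cst c \- Z)).
  - exact: mZY (measurable_itv _).
  - exact: measurable_funB.
  - by move=> w /=; rewrite in_itv subr_gt0.
  by under eq_integral do rewrite EFinB; exact: (diff0 _ (measurable_itv _)).2.
apply: filterS2 above below => w /= nZc nZc'.
apply/eqP; rewrite eq_le !leNgt; apply/andP; split; apply/negP.
- by move=> cZ; apply: nZc; rewrite in_itv andbT.
- by move=> Zc; apply: nZc'; rewrite in_itv.
Qed.

Lemma measure_ae_iff (A B : set T) : measurable A -> measurable B ->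
  {ae P, forall w, A w <-> B w} -> P A = P B.
Proof.
move=> mA mB [N [mN N0 ABN]].
have ABw w : ~ N w -> (A w <-> B w).
  by move=> Nw; apply: contrapT => nAB; exact/Nw/ABN.
have AND : A `\` N = B `\` N.
  by apply/seteqP; split=> w [+ Nw]; split=> //; apply/(ABw w Nw).
have null C : measurable C -> P (C `&` N) = 0%E.
  by move=> mC; apply: (subset_measure0 (measurableI _ _ mC mN) mN) => // w [].
rewrite (measureDI P mA mN) (measureDI P mB mN) AND; congr (_ + _)%E.
by rewrite [LHS](null A mA) [RHS](null B mB).
Qed.

Lemma measureCI (A B : set T) (c : R) : measurable A -> measurable B ->
  P (A `&` B) = (c%:E * P B)%E -> P (~` A `&` B) = ((1 - c)%:E * P B)%E.
Proof.
move=> mA mB AB.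
have finB : P B \is a fin_num by exact: fin_num_measure.
have finCB : P (~` A `&` B) \is a fin_num.
  by apply: fin_num_measure; exact: measurableI (measurableC mA) mB.
have : P B = (P (~` A `&` B) + P (A `&` B))%E.
  by rewrite [~` A `&` B]setIC -setDE [A `&` B]setIC; exact: measureDI.
rewrite AB -(fineK finB) -(fineK finCB) -EFinM -EFinD => -[e].
by rewrite -EFinM mulrBl mul1r {1}e addrK.
Qed.

Lemma normal_law_degenerate (Y : T -> R) (m : R) :
  normal_law P Y m 0 -> {ae P, forall w, Y w = m}.
Proof.
case=> mY lawY; exists (Y @^-1` ~` [set m]); split => [||w /= //].
- by have := mY measurableT _ (measurableC (measurable_set1 m)); rewrite setTI.
- rewrite lawY ?eqxx ?indicE ?memNset //; last exact: measurableC.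
  by move/(_ erefl).
Qed.

Lemma normal_law_symmetric_pos (Y : T -> R) (v : R) : v != 0 ->
  normal_law P Y 0 v -> normal_law P (fun w => - Y w) 0 v ->
  P [set w | 0 < Y w] = (2^-1)%:E.
Proof.
move=> /negbTE v0 [mY lawY] [mNY lawNY].
have mpos : measurable [set r : R | 0 < r].
  exact: (measurable_ltr_set [set true] (f := cst 0) (g := id)).
set p := normal_prob 0 (Num.sqrt v) [set r : R | 0 < r].
have Ypos : P [set w | 0 < Y w] = p by have := lawY _ mpos; rewrite v0.
have Yneg : P [set w | Y w < 0] = p.
  have <- : P [set w | 0 < - Y w] = p by have := lawNY _ mpos; rewrite v0.
  by congr (P _); apply/seteqP; split=> w /=; rewrite oppr_gt0.
have Y0 : P [set w | Y w = 0] = 0%E.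
  by have := lawY _ (measurable_set1 0); rewrite v0 => ->; exact: integral_set1.
have mYpos := measurable_ltr_set [set true] (measurable_cst (0 : R)) mY.
have mYneg := measurable_ltr_set [set true] mY (measurable_cst (0 : R)).
have mY0 : measurable [set w | Y w = 0].
  by have := mY measurableT _ (measurable_set1 0); rewrite setTI.
have : P (~` [set w | 0 < Y w]) =
    (P [set w | (Y w < 0)%R] + P [set w | Y w = 0%R])%E.
  rewrite -measureU //; last by apply/seteqP; split=> // w [/= + Yw0]; rewrite Yw0 ltxx.
  congr (P _); apply/seteqP; split=> w /=.
  - by move/negP; rewrite -leNgt le_eqVlt => /orP[/eqP|]; [right|left].
  - by move=> Yw; apply/negP; rewrite -leNgt; case: Yw => [/ltW|->].
rewrite probability_setC // Ypos Yneg Y0 adde0.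
have finp : p \is a fin_num by rewrite -Ypos; exact: fin_num_measure.
by rewrite -(fineK finp) => -[e]; congr EFin; lra.
Qed.
End measure_lemmas.

Section constant_conditional_probability.
Context (R : realType) (d : measure_display) (T : measurableType d)
  (P : probability T R).
Variables (G : set (set T)) (A : set T) (c : R).
Hypotheses (GP : G `<=` measurable) (mA : measurable A).

Lemma cond_prob_version_cstE : cond_prob_version P G A (cst c) ->
  forall B, G B -> P (A `&` B) = (c%:E * P B)%E.
Proof.
move=> [_ [_ intAc]] B GB.
have <- : (\int[P]_(w in B) (cst c w)%:E = c%:E * P B)%E.
  exact: (integral_cst P (GP GB) c%:E).
by rewrite intAc //; symmetry; exact: (integral_indic P (GP GB) mA).
Qed.

Lemma cond_prob_version_cst : sigma_algebra setT G ->
  (forall B, G B -> P (A `&` B) = (c%:E * P B)%E) ->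
  cond_prob_version P G A (cst c).
Proof.
move=> [G0 GC _] AcB; split; [|split].
- move=> Y _; rewrite preimage_cst; case: ifP => _ //.
  by have := GC _ G0; rewrite setD0.
- exact: finite_measure_integrable_cst.
- move=> B GB; transitivity (c%:E * P B)%E.
    exact: (integral_cst P (GP GB) c%:E).
  by rewrite -AcB //; symmetry; exact: (integral_indic P (GP GB) mA).
Qed.

Lemma cond_prob_version_ae_cst (Z : T -> R) :
  (forall B, G B -> P (A `&` B) = (c%:E * P B)%E) ->
  cond_prob_version P G A Z -> {ae P, forall w, Z w = c}.
Proof.
move=> AcB [GZ [iZ intZ]].
have mZ : measurable_fun setT Z by move=> _ Y mY; rewrite setTI; exact/GP/GZ.
apply: ae_eq_cst_of_integral_preimage => // Y mY.
have GZY := GZ _ mY.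
rewrite intZ //; transitivity (P (A `&` Z @^-1` Y)).
  exact: (integral_indic P (GP GZY) mA).
exact: AcB.
Qed.

End constant_conditional_probability.

Lemma preimage_fibers (aT rT : Type) (f : aT -> rT) (U : set rT) :
  f @^-1` U = \bigcup_(u in U) f @^-1` [set u].
Proof. by apply/seteqP; split=> [w Uw|w [u Uu /= ->]] //; exists (f w). Qed.

Section ae_coded_sets.
Context (R : realType) (d : measure_display) (T : measurableType d)
  (P : probability T R).

Definition ae_coded (I : Type) (code : T -> I) (B : set T) :=
  measurable B /\ exists U : set I, {ae P, forall w, B w <-> U (code w)}.

Lemma ae_coded_sigma_algebra (I : Type) (code : T -> I) :
  sigma_algebra setT (ae_coded code).
Proof.
split.
- by split=> //; exists set0; apply: aeW.
- move=> B [mB [U BU]]; split; first exact: measurableD.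
  exists (~` U); apply: filterS BU => w BUw /=.
  by rewrite -BUw; split=> [[_ nB] //|nB]; split.
- move=> B codedB; split; first by apply: bigcupT_measurable => k; case: (codedB k).
  have /choice [U BU] := fun k => (codedB k).2.
  exists (\bigcup_k U k); apply: filterS (ae_foralln BU) => w BUw.
  by split=> -[k _ Bkw]; exists k => //; apply/BUw.
Qed.

Lemma measurable_preimage_fin (I : finType) (code : T -> I) (U : set I) :
  (forall u, measurable (code @^-1` [set u])) -> measurable (code @^-1` U).
Proof.
move=> mfib; rewrite preimage_fibers.
by apply: fin_bigcup_measurable => // u _; exact: mfib.
Qed.

Lemma measureI_preimage_fin (I : finType) (code : T -> I) (E : set T) (c : R) :
  measurable E -> (forall u, measurable (code @^-1` [set u])) ->
  (forall u, P (E `&` code @^-1` [set u]) = (c%:E * P (code @^-1` [set u]))%E) ->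
  forall U, P (E `&` code @^-1` U) = (c%:E * P (code @^-1` U))%E.
Proof.
move=> mE mfib Efib U.
rewrite preimage_fibers.
have finU : finite_set U := finite_finset.
have triv : trivIset U (fun u => code @^-1` [set u]).
  by move=> u v _ _ [w [/= -> ->]].
rewrite setI_bigcupr !measure_fin_bigcup //.
- by rewrite ge0_mule_fsumr //; apply: eq_fsbigr => u _; exact: Efib.
- by move=> u v Uu Uv [w [[_ uw] [_ vw]]]; apply: triv Uu Uv _; exists w.
- by move=> u _; exact: measurableI.
Qed.

Lemma measureI_ae_coded (I : finType) (code : T -> I) (E : set T) (c : R) :
  measurable E -> (forall u, measurable (code @^-1` [set u])) ->
  (forall u, P (E `&` code @^-1` [set u]) = (c%:E * P (code @^-1` [set u]))%E) ->
  forall B, ae_coded code B -> P (E `&` B) = (c%:E * P B)%E.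
Proof.
move=> mE mfib Efib B [mB [U BU]].
have mU := measurable_preimage_fin U mfib.
have EBU : {ae P, forall w, (E `&` B) w <-> (E `&` code @^-1` U) w}.
  by apply: filterS BU => w BUw; split=> -[Ew /BUw].
rewrite (measure_ae_iff (measurableI _ _ mE mB) (measurableI _ _ mE mU) EBU).
by rewrite (measure_ae_iff mB mU BU); exact: measureI_preimage_fin.
Qed.

End ae_coded_sets.

Section hidden_coordinate_instance.
Variable R : realType.

Definition hidden_kernel (x y : option bool) : R :=
  ((x == None) && (y == None))%:R.

Definition sign_target (g : option bool -> R) : set (option bool) :=
  [set Some (0 < g None)].

Lemma hidden_kernel_form (c : option bool -> R) :
  \sum_x \sum_y c x * c y * hidden_kernel x y = c None ^+ 2.
Proof.
rewrite (bigD1 None) //= [X in _ + X]big1 => [|x /negbTE xN]; last first.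
  by rewrite big1 // => y _; rewrite /hidden_kernel xN mulr0.
rewrite addr0 (bigD1 None) //= [X in _ + X]big1 => [|y /negbTE yN]; last first.
  by rewrite /hidden_kernel yN andbF mulr0.
by rewrite addr0 /hidden_kernel eqxx mulr1 expr2.
Qed.

Lemma fun_sigma_sign (X : Type) (x : X) (S : set bool) :
  fun_sigma X [set g : X -> R | S (0 < g x)].
Proof.
apply: sub_sigma_algebra; exists x, [set r | S (0 < r)]; split => //.
exact: (measurable_ltr_set S (f := cst 0) (g := id)).
Qed.

Lemma sign_targetE (g : option bool -> R) (b : bool) :
  sign_target g = [set Some b] <-> (0 < g None) = b.
Proof.
rewrite /sign_target; split=> [gb|->] //.
by have : [set Some (0 < g None)] (Some (0 < g None)) by []; rewrite gb => -[].
Qed.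

End hidden_coordinate_instance.

Section psbax_on_hidden_coordinate.
Context (R : realType) (d : measure_display) (T : measurableType d)
  (P : probability T R).
Variables (F : T -> option bool -> R) (eps : nat -> T -> R)
  (ft : nat -> T -> option bool -> R) (xs : nat -> T -> option bool)
  (sig : nat -> T -> option bool -> R).
Hypothesis run : psbax_run P (fun=> 0) (hidden_kernel R) 0 (@sign_target R)
  [::] F eps ft xs sig.

Let G n := hist [::] xs F eps n.
Let E := [set w | 0 < F w None].

Definition sample_code m w : {ffun 'I_m -> bool} :=
  [ffun i : 'I_m => 0 < ft i.+1 w None].

Lemma F_measurable x : measurable_fun setT (fun w => F w x).
Proof. by case: run. Qed.

Lemma noise_law k : normal_law P (eps k) 0 0.
Proof. by case: run => _ [_ []]. Qed.

Lemma sample_measurable n x : (0 < n)%N -> measurable_fun setT (fun w => ft n w x).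
Proof. by move=> n0; case: run => _ [_ [_ [_ /(_ n n0) [_ [+ _]]]]]; apply. Qed.

Lemma sample_cond_indep n A S Z1 Z2 : (0 < n)%N ->
  pre_info F eps ft n A -> fun_sigma (option bool) S ->
  cond_prob_version P (G n) A Z1 ->
  cond_prob_version P (G n) [set w | S (F w)] Z2 ->
  cond_prob_version P (G n) (A `&` [set w | S (ft n w)]) (Z1 \* Z2).
Proof. by move=> n0; case: run => _ [_ [_ [_ /(_ n n0) [_ [_ [+ _]]]]]]; apply. Qed.

Lemma queryE n w : (0 < n)%N -> xs n w = Some (0 < ft n w None).
Proof.
by move=> n0; case: run => _ [_ [_ [_ /(_ n n0) [_ [_ [_ [/(_ w) [+ _] _]]]]]]].
Qed.

Lemma coordinate_law (a : R) x :
  normal_law P (fun w => a * F w x) 0 ((a * (x == None)%:R) ^+ 2).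
Proof.
have delta (f : option bool -> R) : \sum_y a * (y == x)%:R * f y = a * f x.
  rewrite (bigD1 x) //= eqxx mulr1 [X in _ + X]big1 ?addr0 // => y /negbTE yx.
  by rewrite yx mulr0 mul0r.
case: run => _ [/(_ (fun y => a * (y == x)%:R)) + _].
rewrite hidden_kernel_form eq_sym delta mulr0.
by rewrite (_ : (fun w => _) = (fun w => a * F w x)) //; apply/funext => w; rewrite delta.
Qed.

Lemma hidden_positive : P E = (2^-1)%:E.
Proof.
have law a : normal_law P (fun w => a * F w None) 0 (a ^+ 2).
  by have := coordinate_law a None; rewrite eqxx mulr1.
apply: (@normal_law_symmetric_pos _ _ _ _ _ 1); first exact: oner_neq0.
- have := law 1; rewrite expr1n (_ : (fun w => _) = (fun w => F w None)) //.
  by apply/funext => w; rewrite mul1r.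
- have := law (-1); rewrite sqrrN expr1n (_ : (fun w => _) = (fun w => - F w None)) //.
  by apply/funext => w; rewrite mulN1r.
Qed.

Lemma decoy_ae b : {ae P, forall w, F w (Some b) = 0}.
Proof.
apply: normal_law_degenerate; have := coordinate_law 1 (Some b).
rewrite mulr0 expr0n /= (_ : (fun w => _) = (fun w => F w (Some b))) //.
by apply/funext => w; rewrite mul1r.
Qed.

Lemma locE k w : loc [::] xs k w = Some (0 < ft k.+1 w None).
Proof. by rewrite /loc ltn0 subn0 queryE. Qed.

Lemma obsE k w : obs [::] xs F eps k w =
  (if 0 < ft k.+1 w None then F w (Some true) else F w (Some false)) + eps k w.
Proof. by rewrite /obs locE; case: ifP. Qed.

Lemma obs_measurable k : measurable_fun setT (obs [::] xs F eps k).
Proof.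
rewrite (funext (obsE k)); apply: measurable_funD; last by case: (noise_law k).
apply: measurable_fun_ifT; try exact: F_measurable.
exact: measurable_fun_ltr (measurable_cst _) (sample_measurable None (ltn0Sn k)).
Qed.

Lemma obs_ae k : {ae P, forall w, obs [::] xs F eps k w = 0}.
Proof.
apply: filterS (filterI (decoy_ae true) (filterI (decoy_ae false)
  (normal_law_degenerate (noise_law k)))) => w [Ft [Ff epsk]].
by rewrite obsE epsk Ft Ff if_same addr0.
Qed.

Lemma sample_code_preimage1 m u :
  sample_code m @^-1` [set u] =
  \bigcap_(i in [set: 'I_m]) [set w | (0 < ft i.+1 w None) = u i].
Proof.
apply/seteqP; split=> w /=.
- by move=> <- i _; rewrite ffunE.
- by move=> uw; apply/ffunP => i; rewrite ffunE; exact: uw.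
Qed.

Lemma sample_code_measurable m u : measurable (sample_code m @^-1` [set u]).
Proof.
rewrite sample_code_preimage1; apply: fin_bigcap_measurable => // i _.
apply: (measurable_ltr_set [set u i] (f := cst 0)); first exact: measurable_cst.
exact: sample_measurable.
Qed.

Lemma sample_code_hist m u : G m.+1 (sample_code m @^-1` [set u]).
Proof.
rewrite sample_code_preimage1.
apply: (@fin_bigcap_measurable _ (g_sigma_algebraType _)) => // i _.
apply: sub_sigma_algebra; exists i; split; first by rewrite add0n.
left; exists [set Some (u i)]; apply/seteqP; split=> w /=; rewrite locE.
  by move=> ->.
by case.
Qed.

Lemma hist_ae_coded m : G m.+1 `<=` ae_coded P (sample_code m).
Proof.
apply: smallest_sub; first exact: ae_coded_sigma_algebra.
move=> _ [k [+ [[S ->]|[B [mB ->]]]]]; rewrite add0n => km.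
- have -> : loc [::] xs k @^-1` S =
      sample_code m @^-1` [set u | S (Some (u (Ordinal km)))].
    by apply/seteqP; split=> w; rewrite /= locE ffunE.
  split; first exact/measurable_preimage_fin/sample_code_measurable.
  by exists [set u | S (Some (u (Ordinal km)))]; exact: aeW.
- split; first by have := obs_measurable k measurableT mB; rewrite setTI.
  by exists (fun=> B 0); apply: filterS (obs_ae k) => w /= ->.
Qed.

Lemma hist_measurable m : G m.+1 `<=` measurable.
Proof. by move=> B /hist_ae_coded []. Qed.

Lemma hidden_sign_measurable (S : set bool) : measurable [set w | S (0 < F w None)].
Proof.
apply: (measurable_ltr_set S (f := cst 0)); first exact: measurable_cst.
exact: F_measurable.
Qed.

Lemma hist_half_of_sample_code m :
  (forall u, P (E `&` sample_code m @^-1` [set u]) =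
             ((2^-1)%:E * P (sample_code m @^-1` [set u]))%E) ->
  forall B, G m.+1 B -> P (E `&` B) = ((2^-1)%:E * P B)%E.
Proof.
move=> half B /hist_ae_coded.
exact: (measureI_ae_coded (hidden_sign_measurable [set true])
  (@sample_code_measurable m) half).
Qed.

Lemma hidden_sign_cond m b :
  (forall B, G m.+1 B -> P (E `&` B) = ((2^-1)%:E * P B)%E) ->
  cond_prob_version P (G m.+1) [set w | (0 < F w None) = b] (cst 2^-1).
Proof.
move=> half; apply: cond_prob_version_cst.
- exact: hist_measurable.
- exact: (hidden_sign_measurable [set b]).
- exact: smallest_sigma_algebra.
move=> B GB; case: b; first exact: half.
have -> : [set w | (0 < F w None) = false] = ~` E.
  by apply/seteqP; split=> w; rewrite /E /=; [move=> -> | move/negP/negbTE].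
rewrite (measureCI (hidden_sign_measurable [set true]) (hist_measurable GB) (half B GB)).
by congr (_%:E * _)%E; lra.
Qed.

Lemma sample_code_succ m (u : {ffun 'I_m.+1 -> bool}) :
  sample_code m.+1 @^-1` [set u] =
  [set w | (0 < ft m.+1 w None) = u ord_max] `&`
  sample_code m @^-1` [set [ffun i => u (widen_ord (leqnSn m) i)]].
Proof.
apply/seteqP; split=> w /=.
- move=> <-; split; first by rewrite ffunE.
  by apply/ffunP => i; rewrite !ffunE.
- move=> [um /ffunP uw]; apply/ffunP => i; rewrite ffunE.
  case: (unliftP ord_max i) => [j ->|-> //].
  have -> : lift ord_max j = widen_ord (leqnSn m) j by apply: val_inj; exact: lift_max.
  by have := uw j; rewrite !ffunE.
Qed.

Lemma sample_code_half m u :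
  P (E `&` sample_code m @^-1` [set u]) =
  ((2^-1)%:E * P (sample_code m @^-1` [set u]))%E.
Proof.
elim: m u => [|m IH] u.
  have -> : sample_code 0 @^-1` [set u] = setT.
    by apply/seteqP; split=> // w _; apply/ffunP => -[].
  by rewrite setIT hidden_positive probability_setT mule1.
have half := hist_half_of_sample_code IH.
set u' := [ffun i => u (widen_ord (leqnSn m) i)].
set Sb := [set w | (0 < ft m.+1 w None) = u ord_max].
(* Given D_m, the sign of the new sample at None has conditional probability
   1/2 and is independent of the information A available before drawing it. *)
have sample A c : pre_info F eps ft m.+1 A -> measurable A ->
    cond_prob_version P (G m.+1) A (cst c) ->
    P ((A `&` Sb) `&` sample_code m @^-1` [set u']) =
    ((c * 2^-1)%:E * P (sample_code m @^-1` [set u']))%E.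
  move=> preA mA Ac.
  have mASb : measurable (A `&` Sb).
    apply: measurableI mA _; apply: (measurable_ltr_set [set u ord_max] (f := cst 0)).
      exact: measurable_cst.
    exact: sample_measurable.
  have ASb := sample_cond_indep (ltn0Sn m) preA (fun_sigma_sign None [set u ord_max]) Ac
    (hidden_sign_cond (u ord_max) half).
  exact: (cond_prob_version_cstE (c := c * 2^-1) (@hist_measurable m) mASb ASb
    (sample_code_hist u')).
rewrite sample_code_succ setIA (sample E 2^-1).
- rewrite -[Sb `&` _]setTI setIA (sample setT 1).
  + by rewrite mul1r muleA -EFinM.
  + exact: (@measurableT _ (g_sigma_algebraType _)).
  + exact: measurableT.
  + apply: cond_prob_version_cst => //; first exact: hist_measurable.
      exact: smallest_sigma_algebra.
    by move=> B _; rewrite setTI mul1e.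
- apply: sub_sigma_algebra; left; exists [set g | 0 < g None]; split => //.
  exact: (fun_sigma_sign None [set true]).
- exact: (hidden_sign_measurable [set true]).
- exact: hidden_sign_cond true half.
Qed.

Lemma cond_prob_sign_target_ae (Pn : nat -> T -> R) :
  (forall n, (0 < n)%N -> cond_prob_version P (G n)
     [set w | sign_target (F w) = [set Some true]] (Pn n)) ->
  {ae P, forall w, Pn n w @[n --> \oo] --> (2^-1 : R)}.
Proof.
move=> condPn.
have targetE : [set w | sign_target (F w) = [set Some true]] = E.
  by apply/seteqP; split=> w /sign_targetE.
have Pn_half n : {ae P, forall w, (0 < n)%N -> Pn n w = 2^-1}.
  case: n => [|m]; first exact: aeW.
  have := condPn m.+1 (ltn0Sn m); rewrite targetE.
  move=> /(cond_prob_version_ae_cst (@hist_measurable m)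
    (hidden_sign_measurable [set true]) (hist_half_of_sample_code (@sample_code_half m))).
  by apply: filterS => w + _.
apply: filterS (ae_foralln Pn_half) => w Pn_w.
by apply: cvg_near_cst; exists 1%N => // n /= n0; exact: Pn_w.
Qed.

End psbax_on_hidden_coordinate.

Theorem theorem2 (R : realType) :
  exists (X : finType) (mu : X -> R) (K : X -> X -> R) (s2 : R)
         (O : (X -> R) -> set X) (s0 : seq X),
    (forall x y, K x y = K y x) /\
    (forall c : X -> R, 0 <= \sum_x \sum_y c x * c y * K x y) /\
    0 <= s2 /\
    (forall g, O g !=set0) /\
    (forall Y, fun_sigma X [set g | O g = Y]) /\
    forall (d : measure_display) (T : measurableType d) (P : probability T R)
      (F : T -> X -> R) (eps : nat -> T -> R) (ft : nat -> T -> X -> R)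
      (xs : nat -> T -> X) (sig : nat -> T -> X -> R),
      psbax_run P mu K s2 O s0 F eps ft xs sig ->
      exists Y : set X,
        forall Pn : nat -> T -> R,
          (forall n, (0 < n)%N ->
             cond_prob_version P (hist s0 xs F eps n)
               [set w | O (F w) = Y] (Pn n)) ->
          {ae P, forall w, Pn n w @[n --> \oo] --> (2%:R^-1 : R)}.
Proof.
exists (option bool), (fun=> 0), (hidden_kernel R), 0, (@sign_target R), [::].
split; first by move=> x y; rewrite /hidden_kernel andbC.
split; first by move=> c; rewrite hidden_kernel_form sqr_ge0.
split=> //; split; first by move=> g; exists (Some (0 < g None)).
split; first by move=> Y; exact: (fun_sigma_sign None [set b | [set Some b] = Y]).
move=> d T P F eps ft xs sig run; exists [set Some true].
exact: cond_prob_sign_target_ae run.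
Qed.
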